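(* Let $\mathbf A=\bigoplus_{i\in I}\mathbf H_i$ be a BL-chain represented as an ordinal sum of totally ordered Wajsberg hoops, and let $\{a_x\}_{x\in X}$ be a family of elements of $A$. (1) If $\inf_x a_x$ and $\inf_x a_x^2$ exist and $(\inf_x a_x)^2=\inf_x a_x^2$, then $\{a_x\}_{x\in X}$ is $\wedge$-connected or $\inf_x a_x$ is idempotent. (2) If $\sup_x a_x$ exists, then $\{a_x\}_{x\in X}$ is $\vee$-connected or $\sup_x a_x$ is idempotent.
   Context: A BL-algebra is an algebra $(A,\cdot,\to,\wedge,\vee,0,1)$ such that $(A,\wedge,\vee,0,1)$ is a bounded lattice, $(A,\cdot,1)$ is a commutative monoid, $x\cdot y\le z$ iff $x\le y\to z$, $x\wedge y=x\cdot(x\to y)$ and $(x\to y)\vee(y\to x)=1$; a BL-chain is a totally ordered BL-algebra; $a^2=a\cdot a$, and $a$ is idempotent if $a^2=a$. A hoop is an algebra $(H,\cdot,\to,1)$ such that $(H,\cdot,1)$ is a commutative monoid and $x\to x=1$, $x\cdot(x\to y)=y\cdot(y\to x)$, $x\to(y\to z)=(x\cdot y)\to z$; a Wajsberg hoop additionally satisfies $(x\to y)\to y=(y\to x)\to x$. Given a totally ordered index set $I$ and hoops $\mathbf H_i$ with $H_i\cap H_j=\{1\}$ for $i\ne j$, the ordinal sum $\bigoplus_{i\in I}\mathbf H_i$ has universe $\bigcup_iH_i$ with: $x\to y=x\to^{\mathbf H_i}y$ if $x,y\in H_i$; $x\to y=y$ if $x\in H_i,y\in H_j,i>j$; $x\to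 y=1$ if $x\in H_i\setminus\{1\},y\in H_j,i<j$; $x\cdot y=x\cdot^{\mathbf H_i}y$ if $x,y\in H_i$; $x\cdot y=y$ if $x\in H_i,y\in H_j\setminus\{1\},i>j$; $x\cdot y=x$ if $x\in H_i\setminus\{1\},y\in H_j,i<j$. For $C\subseteq A$ with $\bigwedge C$ existing, $C$ is $\wedge$-connected if there are $i\in I$ and $c\in C$ with $\bigwedge C\in H_i$ and $c\in H_i$; dually, for $\bigvee C$ existing, $C$ is $\vee$-connected if there are $i\in I$ and $c\in C$ with $\bigvee C\in H_i$ and $c\in H_i$. *)

Record BLAlgebra := {
  carrier :> Type;
  bl_mul : carrier -> carrier -> carrier;
  bl_imp : carrier -> carrier -> carrier;
  bl_meet : carrier -> carrier -> carrier;
  bl_join : carrier -> carrier -> carrier;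
  bl_zero : carrier;
  bl_one : carrier;
  meetA : forall x y z, bl_meet x (bl_meet y z) = bl_meet (bl_meet x y) z;
  joinA : forall x y z, bl_join x (bl_join y z) = bl_join (bl_join x y) z;
  meetC : forall x y, bl_meet x y = bl_meet y x;
  joinC : forall x y, bl_join x y = bl_join y x;
  meet_absorb : forall x y, bl_meet x (bl_join x y) = x;
  join_absorb : forall x y, bl_join x (bl_meet x y) = x;
  meet0 : forall x, bl_meet bl_zero x = bl_zero;
  join1 : forall x, bl_join x bl_one = bl_one;
  mulA : forall x y z, bl_mul x (bl_mul y z) = bl_mul (bl_mul x y) z;
  mulC : forall x y, bl_mul x y = bl_mul y x;
  mul1 : forall x, bl_mul x bl_one = x;
  (* residuation, w.r.t. the lattice order x <= y iff x meet y = x *)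
  residuation : forall x y z,
    bl_meet (bl_mul x y) z = bl_mul x y <-> bl_meet x (bl_imp y z) = x;
  divisibility : forall x y, bl_meet x y = bl_mul x (bl_imp x y);
  prelinearity : forall x y, bl_join (bl_imp x y) (bl_imp y x) = bl_one
}.

Arguments bl_mul {b}. Arguments bl_imp {b}. Arguments bl_meet {b}.
Arguments bl_join {b}. Arguments bl_zero {b}. Arguments bl_one {b}.

Section BL.
Variable A : BLAlgebra.

Definition ble (x y : A) : Prop := bl_meet x y = x.

Definition is_BL_chain : Prop := forall x y : A, ble x y \/ ble y x.

Definition idempotent (a : A) : Prop := bl_mul a a = a.

Definition is_inf {X : Type} (a : X -> A) (m : A) : Prop :=
  (forall x, ble m (a x)) /\ (forall l, (forall x, ble l (a x)) -> ble l m).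

Definition is_sup {X : Type} (a : X -> A) (s : A) : Prop :=
  (forall x, ble (a x) s) /\ (forall u, (forall x, ble (a x) u) -> ble s u).

Definition is_tot_wajsberg_subhoop (H : A -> Prop) : Prop :=
  H bl_one /\
  (forall x y, H x -> H y -> H (bl_mul x y)) /\
  (forall x y, H x -> H y -> H (bl_imp x y)) /\
  (forall x y z, H x -> H y -> H z -> bl_mul x (bl_mul y z) = bl_mul (bl_mul x y) z) /\
  (forall x y, H x -> H y -> bl_mul x y = bl_mul y x) /\
  (forall x, H x -> bl_mul x bl_one = x) /\
  (forall x, H x -> bl_imp x x = bl_one) /\
  (forall x y, H x -> H y -> bl_mul x (bl_imp x y) = bl_mul y (bl_imp y x)) /\
  (forall x y z, H x -> H y -> H z ->
      bl_imp x (bl_imp y z) = bl_imp (bl_mul x y) z) /\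
  (forall x y, H x -> H y ->
      bl_imp (bl_imp x y) y = bl_imp (bl_imp y x) x) /\
  (* totally ordered (hoop order: x <= y iff x -> y = 1) *)
  (forall x y, H x -> H y -> bl_imp x y = bl_one \/ bl_imp y x = bl_one).

Definition is_ordinal_sum (I : Type) (ltI : I -> I -> Prop) (H : I -> A -> Prop) : Prop :=
  (forall i, ~ ltI i i) /\
  (forall i j k, ltI i j -> ltI j k -> ltI i k) /\
  (forall i j, ltI i j \/ i = j \/ ltI j i) /\
  (forall i, is_tot_wajsberg_subhoop (H i)) /\
  (forall i j x, i <> j -> H i x -> H j x -> x = bl_one) /\
  (forall x : A, exists i, H i x) /\
  (* operations of the ordinal sum (same component: restricted operations) *)
  (forall i j x y, H i x -> H j y -> ltI j i -> bl_imp x y = y) /\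
  (forall i j x y, H i x -> H j y -> ltI i j -> x <> bl_one -> bl_imp x y = bl_one) /\
  (forall i j x y, H i x -> H j y -> ltI j i -> y <> bl_one -> bl_mul x y = y) /\
  (forall i j x y, H i x -> H j y -> ltI i j -> x <> bl_one -> bl_mul x y = x).

Definition meet_connected {I X : Type} (H : I -> A -> Prop) (a : X -> A) (m : A) : Prop :=
  exists i, exists c : X, H i m /\ H i (a c).

Definition join_connected {I X : Type} (H : I -> A -> Prop) (a : X -> A) (s : A) : Prop :=
  exists i, exists c : X, H i s /\ H i (a c).

End BL.

(* In an ordinal sum, a non-unit element lies below everything in higher
   components, so an element x <> 1 below some y of a different component is
   even below y * y (squaring stays in y's component, and y = 1 is trivial).
   If m = inf a is not 1 and shares no component with the family, this gives
   m <= (a x)^2 for all x, hence m <= inf (a x)^2 = m^2.  Dually, if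
   s = sup a is not 1 and shares no component with the family, every a x is
   below s^2, so s <= s^2.  Either way the element is idempotent. *)

From Stdlib Require Import Classical.

Section BLOrder.
Variable A : BLAlgebra.

Lemma meet_idem (x : A) : bl_meet x x = x.
Proof. rewrite <- (join_absorb A x x) at 2. apply meet_absorb. Qed.

Lemma ble_top (x : A) : ble A x bl_one.
Proof. unfold ble. rewrite <- (join1 A x). apply meet_absorb. Qed.

Lemma ble_antisym (x y : A) : ble A x y -> ble A y x -> x = y.
Proof. unfold ble; intros Hxy Hyx. rewrite <- Hxy, meetC. exact Hyx. Qed.

Lemma top_ble_eq (x : A) : ble A bl_one x -> x = bl_one.
Proof. intro h. apply ble_antisym; [apply ble_top | exact h]. Qed.

Lemma mul1l (x : A) : bl_mul bl_one x = x.
Proof. rewrite mulC. apply mul1. Qed.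

Lemma ble_of_imp_one (x y : A) : bl_imp x y = bl_one -> ble A x y.
Proof.
  intro h. pose proof (proj2 (residuation A bl_one x y)) as R.
  rewrite mul1l in R. apply R. rewrite h. apply meet_idem.
Qed.

Lemma imp_refl (x : A) : bl_imp x x = bl_one.
Proof.
  apply ble_antisym; [apply ble_top |].
  pose proof (proj1 (residuation A bl_one x x)) as R.
  rewrite mul1l in R. apply R. apply meet_idem.
Qed.

Lemma ble_sq (x : A) : ble A (bl_mul x x) x.
Proof. apply (proj2 (residuation A x x x)). rewrite imp_refl. apply ble_top. Qed.

Lemma idempotent_of_ble_sq (x : A) : ble A x (bl_mul x x) -> idempotent A x.
Proof. intro h. apply ble_antisym; [apply ble_sq | exact h]. Qed.

End BLOrder.

Section OrdinalSum.
Variables (A : BLAlgebra) (I : Type) (ltI : I -> I -> Prop) (H : I -> A -> Prop).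
Hypothesis sum : is_ordinal_sum A I ltI H.

Lemma ordsum_mul_closed i (x y : A) : H i x -> H i y -> H i (bl_mul x y).
Proof.
  destruct sum as [_ [_ [_ [hoop _]]]].
  destruct (hoop i) as [_ [closed _]]. apply closed.
Qed.

Lemma ordsum_ble_of_lt i j (x y : A) :
  H i x -> H j y -> ltI i j -> x <> bl_one -> ble A x y.
Proof.
  destruct sum as [_ [_ [_ [_ [_ [_ [_ [imp_lt _]]]]]]]].
  intros hx hy lij nx. apply ble_of_imp_one. eapply imp_lt; eauto.
Qed.

Lemma ordsum_component_unique i j (x : A) :
  H i x -> H j x -> x <> bl_one -> i = j.
Proof.
  destruct sum as [_ [_ [_ [_ [disj _]]]]].
  intros hi hj nx. apply NNPP. intro nij. exact (nx (disj i j x nij hi hj)).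
Qed.

Lemma ordsum_ble_sq_of_other_component i j (x y : A) :
  H i x -> H j y -> i <> j -> ble A x y -> x <> bl_one -> ble A x (bl_mul y y).
Proof.
  destruct sum as [_ [_ [tri _]]].
  intros hx hy nij xy nx.
  destruct (tri i j) as [lij | [eij | lji]]; [| contradiction |].
  - exact (ordsum_ble_of_lt i j x _ hx (ordsum_mul_closed j y y hy hy) lij nx).
  - destruct (classic (y = bl_one)) as [y1 | ny].
    + rewrite y1, mul1. apply ble_top.
    + assert (exy : x = y).
      { apply ble_antisym; [exact xy |]. exact (ordsum_ble_of_lt j i y x hy hx lji ny). }
      subst y. exact (False_ind _ (nij (ordsum_component_unique i j x hx hy nx))).
Qed.

Lemma ordsum_cover (x : A) : exists i, H i x.
Proof. destruct sum as [_ [_ [_ [_ [_ [cover _]]]]]]. apply cover. Qed.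

Variables (X : Type) (a : X -> A).

Lemma inf_meet_connected_or_idempotent (m : A) :
  is_inf A a m ->
  is_inf A (fun x => bl_mul (a x) (a x)) (bl_mul m m) ->
  meet_connected A H a m \/ idempotent A m.
Proof.
  intros [lb _] [_ glb_sq].
  destruct (classic (meet_connected A H a m)) as [c | nc]; [now left | right].
  destruct (classic (m = bl_one)) as [m1 | nm].
  { rewrite m1. apply mul1. }
  destruct (ordsum_cover m) as [i hm].
  apply idempotent_of_ble_sq, glb_sq. intro x.
  destruct (ordsum_cover (a x)) as [j hx].
  apply (ordsum_ble_sq_of_other_component i j); auto.
  intros <-. apply nc. now exists i, x.
Qed.

Lemma sup_join_connected_or_idempotent (s : A) :
  is_sup A a s -> join_connected A H a s \/ idempotent A s.
Proof.
  intros [ub lub].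
  destruct (classic (join_connected A H a s)) as [c | nc]; [now left | right].
  destruct (classic (s = bl_one)) as [s1 | ns].
  { rewrite s1. apply mul1. }
  destruct (ordsum_cover s) as [i hs].
  apply idempotent_of_ble_sq, lub. intro x.
  destruct (ordsum_cover (a x)) as [j hx].
  apply (ordsum_ble_sq_of_other_component j i); auto.
  - intros ->. apply nc. now exists i, x.
  - intro x1. apply ns, top_ble_eq. rewrite <- x1. apply ub.
Qed.

End OrdinalSum.

Theorem mainTheorem11 (A : BLAlgebra) (I : Type) (ltI : I -> I -> Prop)
  (H : I -> A -> Prop) (X : Type) (a : X -> A) :
  is_BL_chain A ->
  is_ordinal_sum A I ltI H ->
  (forall m m2 : A,
      is_inf A a m ->
      is_inf A (fun x => bl_mul (a x) (a x)) m2 ->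
      bl_mul m m = m2 ->
      meet_connected A H a m \/ idempotent A m) /\
  (forall s : A,
      is_sup A a s ->
      join_connected A H a s \/ idempotent A s).
Proof.
  intros _ sum. split.
  - intros m m2 inf_m inf_sq <-.
    exact (inf_meet_connected_or_idempotent A I ltI H sum X a m inf_m inf_sq).
  - exact (sup_join_connected_or_idempotent A I ltI H sum X a).
Qed.
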